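(* Let $K$ be a ramified quadratic extension of $\mathbb{Q}_2$, $d=2m$ with $m$ odd, $m\ge3$, and $f=a_1x_1^d+\dots+a_sx_s^d$ with all $a_i\in\mathcal{O}\setminus\{0\}$. Suppose that for some level $k$, $f$ has four distinct variables at level $k$ that can be split into two disjoint pairs, each pair consisting of two variables with the same $\pi$-coefficient, and that $f$ has a variable in at least one of the levels $k+2$, $k+3$, $k+4$. Then $f$ has a nontrivial zero in $K$.
   Context: $\mathcal{O}$ is the ring of integers of $K$ and $\pi$ the uniformizer: $\pi=\sqrt{2},\sqrt{-2},\sqrt{10},\sqrt{-10},1+\sqrt{-1},1+\sqrt{-5}$ for $K=\mathbb{Q}_2(\sqrt2),\mathbb{Q}_2(\sqrt{-2}),\mathbb{Q}_2(\sqrt{10}),\mathbb{Q}_2(\sqrt{-10}),\mathbb{Q}_2(\sqrt{-1}),\mathbb{Q}_2(\sqrt{-5})$ respectively. Each unit $u$ has a unique expansion $u=c_0+c_1\pi+c_2\pi^2+\cdots$ with $c_j\in\{0,1\}$, $c_0=1$. Writing $a_i=\pi^r u$ with $u$ a unit, the variable $x_i$ is at level $r\bmod d$ (levels are residues modulo $d$), and its $\pi$-coefficient is $c_1$ of $u$. A nontrivial zero is a point of $K^s$, not all coordinates zero, where $f$ vanishes. *)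

(* The 2-adic ring of integers O of K = Q_2(sqrt D) is
   modelled as the inverse limit  O = lim_n (Z/2^n Z)[sqrt D]:
   an element is a coherent sequence of pairs (a_n, b_n) of integers,
   a_n + b_n sqrt D, taken modulo 2^n. *)
From Stdlib Require Import ZArith List Arith.
Open Scope Z_scope.

(* The six ramified quadratic extensions K = Q_2(sqrt D). *)
Definition ramified_D (D : Z) : Prop :=
  D = 2 \/ D = -2 \/ D = 10 \/ D = -10 \/ D = -1 \/ D = -5.

(* elements a + b sqrt D of Z[sqrt D] *)
Definition ZD := (Z * Z)%type.
Definition addZD (x y : ZD) : ZD := (fst x + fst y, snd x + snd y).
Definition mulZD (D : Z) (x y : ZD) : ZD :=
  (fst x * fst y + D * snd x * snd y, fst x * snd y + snd x * fst y).
Definition zeroZD : ZD := (0, 0).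
Definition oneZD : ZD := (1, 0).
Definition ofZ (z : Z) : ZD := (z, 0).
Fixpoint powZD (D : Z) (x : ZD) (k : nat) : ZD :=
  match k with O => oneZD | S k' => mulZD D x (powZD D x k') end.

Definition congr (n : nat) (x y : ZD) : Prop :=
  (2 ^ Z.of_nat n | fst x - fst y) /\ (2 ^ Z.of_nat n | snd x - snd y).

Record Oel := { oseq : nat -> ZD;
                ocoh : forall n, congr n (oseq (S n)) (oseq n) }.

Definition eqS (x y : nat -> ZD) : Prop := forall n, congr n (x n) (y n).
Definition eqO (x y : Oel) : Prop := eqS (oseq x) (oseq y).

(* the uniformizer: sqrt D for D = +-2, +-10; 1 + sqrt D for D = -1, -5 *)
Definition piZD (D : Z) : ZD :=
  if orb (Z.eqb D (-1)) (Z.eqb D (-5)) then (1, 1) else (0, 1).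

Definition isUnitO (D : Z) (u : Oel) : Prop :=
  exists v : Oel, eqS (fun n => mulZD D (oseq u n) (oseq v n)) (fun _ => oneZD).

(* a = pi^r u with u a unit, and the pi-coefficient c1 of u is c
   (i.e. u = 1 + c*pi + pi^2 * w for some w in O, c in {0,1}). *)
Definition decomp (D : Z) (a : Oel) (r : nat) (c : bool) : Prop :=
  exists u : Oel, isUnitO D u /\
    eqS (oseq a) (fun n => mulZD D (powZD D (piZD D) r) (oseq u n)) /\
    exists w : Oel,
      eqS (oseq u)
        (fun n => addZD (addZD oneZD (mulZD D (ofZ (if c then 1 else 0)) (piZD D)))
                        (mulZD D (powZD D (piZD D) 2) (oseq w n))).

Definition level_coef (D : Z) (d : nat) (a : Oel) (l : nat) (c : bool) : Prop :=
  exists r : nat, decomp D a r c /\ Nat.modulo r d = Nat.modulo l d.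

Definition at_level (D : Z) (d : nat) (a : Oel) (l : nat) : Prop :=
  exists c : bool, level_coef D d a l c.

Definition sumZD (s : nat) (F : nat -> ZD) : ZD :=
  fold_right (fun i acc => addZD (F i) acc) zeroZD (List.seq 0 s).

Fixpoint maxl (s : nat) (e : nat -> nat) : nat :=
  match s with O => O | S s' => Nat.max (e s') (maxl s' e) end.

(* A point of K^s is written (x_i / 2^(e_i))_i with x_i in O (K = O[1/2]).
   f = sum a_i X_i^d vanishes there iff, after clearing the common
   denominator 2^(E d) with E = max e_i, sum a_i x_i^d 2^((E-e_i) d) = 0 in O;
   it is nontrivial iff some x_i is nonzero in O. *)
Definition has_nontrivial_zero_K (D : Z) (d s : nat) (a : nat -> Oel) : Prop :=
  exists (x : nat -> Oel) (e : nat -> nat),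
    (exists i, (i < s)%nat /\ ~ eqS (oseq (x i)) (fun _ => zeroZD)) /\
    eqS (fun n => sumZD s (fun i =>
           mulZD D (oseq (a i) n)
             (mulZD D (powZD D (oseq (x i) n) d)
                      (ofZ (2 ^ Z.of_nat ((maxl s e - e i) * d)%nat)))))
        (fun _ => zeroZD).

(* Write a_i = π^(r_i) u_i with u_i a unit.  Multiplying the variables by powers of π brings
   the four level-k terms and one term of level k + j, j ∈ {2, 3, 4}, to a common factor π^E,
   leaving u1 y1^d + u2 y2^d + u3 y3^d + u4 y4^d + π^j u5 y5^d.  As d = 2m with m odd,
   (1 + π)^d ≡ (1 + π)^2 mod π^5, so for y_i ∈ {0, 1, 1 + π} this sum modulo π^5 depends only on
   the residues of the u_i; a finite computation over these residues, for each of the six fields,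
   shows that some choice with y1 or y3 a unit makes it vanish modulo π^5 (this is where the two
   pairs with equal π-coefficients are needed).  The derivative of u y^d has valuation
   v(d) = v(2) = 2 and 5 > 2 · 2, so Hensel's lemma lifts the solution in that variable to a
   zero. *)

From Stdlib Require Import ZArith List Arith Lia Bool Ring Znumtheory Permutation.
From Stdlib Require Import ClassicalDescription.
Import ListNotations.
Open Scope Z_scope.

Definition oppZD (x : ZD) : ZD := (- fst x, - snd x).
Definition subZD (x y : ZD) : ZD := addZD x (oppZD y).

Lemma ZD_ext (x y : ZD) : fst x = fst y -> snd x = snd y -> x = y.
Proof. destruct x, y; simpl; intros; subst; reflexivity. Qed.

Lemma ZD_ring (D : Z) :
  ring_theory zeroZD oneZD addZD (mulZD D) subZD oppZD (@eq ZD).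
Proof.
  constructor; intros; repeat match goal with p : ZD |- _ => destruct p end;
    unfold subZD, addZD, mulZD, oppZD, zeroZD, oneZD; cbn [fst snd]; f_equal; ring.
Qed.

Infix "+'" := addZD (at level 50, left associativity).
Infix "-'" := subZD (at level 50, left associativity).

Lemma congr_refl n x : congr n x x.
Proof. split; rewrite Z.sub_diag; apply Z.divide_0_r. Qed.

Lemma congr_add n x x' y y' :
  congr n x x' -> congr n y y' -> congr n (x +' y) (x' +' y').
Proof.
  intros [H1 H2] [H3 H4]; split; cbn [fst snd addZD].
  - replace (fst x + fst y - (fst x' + fst y')) with ((fst x - fst x') + (fst y - fst y'))
      by ring.
    apply Z.divide_add_r; assumption.
  - replace (snd x + snd y - (snd x' + snd y')) with ((snd x - snd x') + (snd y - snd y'))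
      by ring.
    apply Z.divide_add_r; assumption.
Qed.

Lemma congr_mul_l D c n x y : congr n x y -> congr n (mulZD D c x) (mulZD D c y).
Proof.
  intros [H1 H2]; split; cbn [fst snd mulZD].
  - replace (fst c * fst x + D * snd c * snd x - (fst c * fst y + D * snd c * snd y))
      with (fst c * (fst x - fst y) + D * snd c * (snd x - snd y)) by ring.
    apply Z.divide_add_r; apply Z.divide_mul_r; assumption.
  - replace (fst c * snd x + snd c * fst x - (fst c * snd y + snd c * fst y))
      with (fst c * (snd x - snd y) + snd c * (fst x - fst y)) by ring.
    apply Z.divide_add_r; apply Z.divide_mul_r; assumption.
Qed.

Definition constO (c : ZD) : Oel := Build_Oel (fun _ => c) (fun n => congr_refl n c).
Definition addO (x y : Oel) : Oel :=
  Build_Oel (fun n => oseq x n +' oseq y n) (fun n => congr_add n _ _ _ _ (ocoh x n) (ocoh y n)).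
Definition scaleO (D : Z) (c : ZD) (x : Oel) : Oel :=
  Build_Oel (fun n => mulZD D c (oseq x n)) (fun n => congr_mul_l D c n _ _ (ocoh x n)).

(** * The finite computation modulo π^5 *)

(* [pi_dvdb D x] decides π | x: modulo π, √D ≡ 0 if D is even and √D ≡ 1 if D is odd. *)
Definition pi_dvdb (D : Z) (x : ZD) : bool := Z.even (fst x + (if Z.odd D then snd x else 0)).

(* A representative of x modulo π^5: as 8 and 4π generate π^5 O ∩ Z[√D], the pairs in
   [0, 8) × [0, 4) represent all classes. *)
Definition res5 (D : Z) (x : ZD) : ZD :=
  ((fst x - 4 * (snd x / 4) * fst (piZD D)) mod 8, snd x mod 4).

Definition residues5 : list ZD := list_prod (map Z.of_nat (seq 0 8)) (map Z.of_nat (seq 0 4)).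

Definition digit_pi (D : Z) (c : bool) : ZD := mulZD D (ofZ (if c then 1 else 0)) (piZD D).

Definition congr2b (x y : ZD) : bool := Z.even (fst x - fst y) && Z.even (snd x - snd y).

Definition unit_residues (D : Z) : list ZD := filter (fun u => negb (pi_dvdb D u)) residues5.

Definition digit_residues (D : Z) (c : bool) : list ZD :=
  filter (fun u => congr2b u (oneZD +' digit_pi D c)) residues5.

Definition one_plus_pi (D : Z) : ZD := oneZD +' piZD D.

(* Codes 0, 1, 2 stand for the values 0, 1, 1 + π of a variable, and [dpow_res D e] is the
   d-th power of that value modulo π^5 (for d ≡ 2 mod 4). *)
Definition dpow_res (D : Z) (e : nat) : ZD :=
  match e with O => zeroZD | 1%nat => oneZD | _ => powZD D (one_plus_pi D) 2 end.

Definition pair_term (D : Z) (u1 u2 : ZD) (e : nat * nat) : ZD :=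
  mulZD D u1 (dpow_res D (fst e)) +' mulZD D u2 (dpow_res D (snd e)).

Definition single_term (D : Z) (j : nat) (u : ZD) (e : nat) : ZD :=
  mulZD D (mulZD D (powZD D (piZD D) j) u) (dpow_res D e).

Definition pair_codes : list (nat * nat) := [(0, 0); (1, 1); (2, 1); (1, 2); (2, 2)]%nat.
Definition single_codes : list nat := [0; 1; 2]%nat.

Definition pair_profile (D : Z) (u : ZD * ZD) : list ((nat * nat) * ZD) :=
  map (fun e => (e, res5 D (pair_term D (fst u) (snd u) e))) pair_codes.
Definition single_profile (D : Z) (j : nat) (u : ZD) : list (nat * ZD) :=
  map (fun e => (e, res5 D (single_term D j u e))) single_codes.

Definition ZD_eq_dec : forall x y : ZD, {x = y} + {x <> y}.
Proof. decide equality; apply Z.eq_dec. Defined.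
Definition pair_profile_eq_dec : forall p q : list ((nat * nat) * ZD), {p = q} + {p <> q}.
Proof.
  apply list_eq_dec. decide equality; [apply ZD_eq_dec|decide equality; apply Nat.eq_dec].
Defined.
Definition single_profile_eq_dec : forall p q : list (nat * ZD), {p = q} + {p <> q}.
Proof. apply list_eq_dec. decide equality; [apply ZD_eq_dec|apply Nat.eq_dec]. Defined.

(* A pair enters the sum modulo π^5 only through its profile, and there are few profiles. *)
Definition pair_profiles (D : Z) (c : bool) : list (list ((nat * nat) * ZD)) :=
  nodup pair_profile_eq_dec
    (map (pair_profile D) (list_prod (digit_residues D c) (digit_residues D c))).
Definition single_profiles (D : Z) (j : nat) : list (list (nat * ZD)) :=
  nodup single_profile_eq_dec (map (single_profile D j) (unit_residues D)).

Definition is_zero5 (D : Z) (x : ZD) : bool := if ZD_eq_dec (res5 D x) zeroZD then true else false.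

(* Besides vanishing modulo π^5, a solution must give a unit value to the first variable of one
   of the pairs: that variable, whose coefficient is a unit, is the one moved by Hensel's lemma. *)
Definition solvable (D : Z) (p1 p2 : list ((nat * nat) * ZD)) (f : list (nat * ZD)) : bool :=
  existsb (fun v1 => existsb (fun v2 => existsb (fun v5 =>
      negb (Nat.eqb (fst (fst v1)) 0 && Nat.eqb (fst (fst v2)) 0) &&
      is_zero5 D (snd v1 +' snd v2 +' snd v5)) f) p2) p1.

Definition residue_check (D : Z) : bool :=
  forallb (fun j => let F := single_profiles D j in
    forallb (fun c => let P := pair_profiles D c in
      forallb (fun c' => let P' := pair_profiles D c' in
        forallb (fun p => forallb (fun p' => forallb (solvable D p p') F) P') P)
      [false; true]) [false; true]) [2; 3; 4]%nat.

Lemma residue_check_ok D : ramified_D D -> residue_check D = true.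
Proof. intro hD; destruct hD as [->|[->|[->|[->|[->| ->]]]]]; vm_compute; reflexivity. Qed.

Lemma residue_check_spec D j c c' p p' f : residue_check D = true -> In j [2; 3; 4]%nat ->
  In p (pair_profiles D c) -> In p' (pair_profiles D c') -> In f (single_profiles D j) ->
  solvable D p p' f = true.
Proof.
  intros H Hj Hp Hp' Hf. unfold residue_check in H.
  rewrite forallb_forall in H. specialize (H j Hj). cbv zeta in H.
  rewrite forallb_forall in H. specialize (H c ltac:(destruct c; cbn; auto)).
  rewrite forallb_forall in H. specialize (H c' ltac:(destruct c'; cbn; auto)).
  rewrite forallb_forall in H. specialize (H p Hp).
  rewrite forallb_forall in H. specialize (H p' Hp').
  rewrite forallb_forall in H. exact (H f Hf).
Qed.

Lemma one_plus_pi_pow4 D :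
  ramified_D D -> res5 D (powZD D (one_plus_pi D) 4 -' oneZD) = zeroZD.
Proof. intro hD; destruct hD as [->|[->|[->|[->|[->| ->]]]]]; reflexivity. Qed.

Section RamifiedQuadratic.
Variable D : Z.
Hypothesis hD : ramified_D D.
Add Ring ZDr : (ZD_ring D).
Local Infix "*'" := (mulZD D) (at level 40, left associativity).
Local Notation "x ^' k" := (powZD D x k) (at level 30).
Local Notation pi := (piZD D).

Ltac ramified_cases := destruct hD as [->|[->|[->|[->|[->| ->]]]]].
Ltac zd_simpl := unfold subZD, mulZD, addZD, oppZD, ofZ, oneZD, zeroZD in *; cbn [fst snd] in *.

Lemma pow_0 x : x ^' 0 = oneZD.
Proof. reflexivity. Qed.

Lemma pow_S x k : x ^' S k = x *' x ^' k.
Proof. reflexivity. Qed.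

Lemma pow_add x a b : x ^' (a + b) = x ^' a *' x ^' b.
Proof. induction a; [rewrite Nat.add_0_l, pow_0|rewrite Nat.add_succ_l, !pow_S, IHa]; ring. Qed.

Lemma pow_mul x y k : (x *' y) ^' k = x ^' k *' y ^' k.
Proof. induction k; [rewrite !pow_0|rewrite !pow_S, IHk]; ring. Qed.

Lemma pow_pow x a b : (x ^' a) ^' b = x ^' (a * b).
Proof.
  induction b; [now rewrite Nat.mul_0_r|].
  now rewrite pow_S, IHb, Nat.mul_succ_r, pow_add, (ZD_ring D).(Rmul_comm).
Qed.

Lemma pow_one k : oneZD ^' k = oneZD.
Proof. induction k; [reflexivity|rewrite pow_S, IHk; ring]. Qed.

Lemma ofZ_add a b : ofZ (a + b) = ofZ a +' ofZ b.
Proof. apply ZD_ext; simpl; ring. Qed.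

Lemma ofZ_mul a b : ofZ (a * b) = ofZ a *' ofZ b.
Proof. apply ZD_ext; simpl; ring. Qed.

Lemma ofZ_pow a k : ofZ (a ^ Z.of_nat k) = ofZ a ^' k.
Proof.
  induction k; [reflexivity|].
  now rewrite Nat2Z.inj_succ, Z.pow_succ_r, ofZ_mul, IHk by lia.
Qed.

Lemma pow_succ_binomial n z h : exists P,
  (z +' h) ^' S n = z ^' S n +' ofZ (Z.of_nat (S n)) *' z ^' n *' h +' h *' h *' P.
Proof.
  induction n as [|n [P HP]].
  - exists zeroZD. rewrite !pow_S, !pow_0. change (ofZ (Z.of_nat 1)) with oneZD. ring.
  - exists (z *' P +' ofZ (Z.of_nat (S n)) *' z ^' n +' h *' P).
    rewrite pow_S, HP, (pow_S z (S n)), (pow_S z n), (Nat2Z.inj_succ (S n)).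
    unfold Z.succ. rewrite ofZ_add. change (ofZ 1) with oneZD. ring.
Qed.

(** * Divisibility by powers of π *)

Lemma even_add_double u k : Z.even (u + 2 * k) = Z.even u.
Proof. rewrite Z.even_add, Z.even_mul. now destruct (Z.even u). Qed.

Lemma pi_dvdb_add x y : pi_dvdb D (x +' y) = Bool.eqb (pi_dvdb D x) (pi_dvdb D y).
Proof.
  destruct x as [a b], y as [c e]; unfold pi_dvdb, addZD; cbn [fst snd].
  replace (a + c + (if Z.odd D then b + e else 0)) with
    ((a + (if Z.odd D then b else 0)) + (c + (if Z.odd D then e else 0)))
    by (destruct (Z.odd D); ring).
  now rewrite Z.even_add.
Qed.

Lemma pi_dvdb_mul x y : pi_dvdb D (x *' y) = pi_dvdb D x || pi_dvdb D y.
Proof.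
  destruct x as [a b], y as [c e]; unfold pi_dvdb, mulZD; cbn [fst snd].
  destruct (Z.odd D) eqn:HD.
  - destruct (proj1 (Z.odd_spec D) HD) as [t ->].
    replace (a * c + (2 * t + 1) * b * e + (a * e + b * c)) with
      ((a + b) * (c + e) + 2 * (t * b * e)) by ring.
    now rewrite even_add_double, Z.even_mul.
  - assert (HE : Z.even D = true) by now rewrite <- Z.negb_odd, HD.
    destruct (proj1 (Z.even_spec D) HE) as [t ->].
    replace (a * c + 2 * t * b * e + 0) with (a * c + 0 + 2 * (t * b * e)) by ring.
    now rewrite even_add_double, !Z.add_0_r, Z.even_mul.
Qed.

Lemma pi_dvdb_ofZ z : pi_dvdb D (ofZ z) = Z.even z.
Proof. unfold pi_dvdb, ofZ; simpl. now destruct (Z.odd D); rewrite Z.add_0_r. Qed.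

Lemma pi_dvdb_one : pi_dvdb D oneZD = false.
Proof. exact (pi_dvdb_ofZ 1). Qed.

Lemma pi_dvdb_pow x k : pi_dvdb D x = false -> pi_dvdb D (x ^' k) = false.
Proof.
  intro H; induction k; [apply pi_dvdb_one|].
  now rewrite pow_S, pi_dvdb_mul, H, IHk.
Qed.

Lemma pi_dvdb_sub x y : pi_dvdb D (x -' y) = Bool.eqb (pi_dvdb D x) (pi_dvdb D y).
Proof.
  replace (x -' y) with (x +' ofZ (-1) *' y)
    by (apply ZD_ext; unfold subZD, addZD, oppZD, ofZ, mulZD; cbn [fst snd]; ring).
  now rewrite pi_dvdb_add, pi_dvdb_mul, pi_dvdb_ofZ.
Qed.

(* π^K divides x in O; odd integers are units of O, so they may be cleared. *)
Definition pi_dvd (K : nat) (x : ZD) : Prop :=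
  exists o y, Z.odd o = true /\ ofZ o *' x = pi ^' K *' y.

Lemma odd_mul o o' : Z.odd o = true -> Z.odd o' = true -> Z.odd (o * o') = true.
Proof. intros H H'. now rewrite Z.odd_mul, H, H'. Qed.

Lemma pi_dvd_add K x y : pi_dvd K x -> pi_dvd K y -> pi_dvd K (x +' y).
Proof.
  intros (o & u & Ho & Hu) (o' & v & Ho' & Hv).
  exists (o * o'), (ofZ o' *' u +' ofZ o *' v); split; [now apply odd_mul|].
  rewrite ofZ_mul.
  transitivity (ofZ o' *' (ofZ o *' x) +' ofZ o *' (ofZ o' *' y)); [ring|].
  rewrite Hu, Hv; ring.
Qed.

Lemma pi_dvd_mul_l K x y : pi_dvd K x -> pi_dvd K (y *' x).
Proof.
  intros (o & u & Ho & Hu). exists o, (y *' u); split; [exact Ho|].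
  transitivity (y *' (ofZ o *' x)); [ring|]. rewrite Hu; ring.
Qed.

Lemma pi_dvd_mul_r K x y : pi_dvd K x -> pi_dvd K (x *' y).
Proof. intro H. replace (x *' y) with (y *' x) by ring. now apply pi_dvd_mul_l. Qed.

Lemma pi_dvd_mul K L x y : pi_dvd K x -> pi_dvd L y -> pi_dvd (K + L) (x *' y).
Proof.
  intros (o & u & Ho & Hu) (o' & v & Ho' & Hv).
  exists (o * o'), (u *' v); split; [now apply odd_mul|].
  rewrite ofZ_mul, pow_add.
  transitivity ((ofZ o *' x) *' (ofZ o' *' y)); [ring|]. rewrite Hu, Hv; ring.
Qed.

Lemma pi_dvd_pi_pow K y : pi_dvd K (pi ^' K *' y).
Proof. exists 1, y; split; [reflexivity|]. change (ofZ 1) with oneZD; ring. Qed.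

Lemma pi_dvd_0 K : pi_dvd K zeroZD.
Proof. replace zeroZD with (pi ^' K *' zeroZD) by ring. apply pi_dvd_pi_pow. Qed.

Lemma pi_dvd_le K L x : (L <= K)%nat -> pi_dvd K x -> pi_dvd L x.
Proof.
  intros HL (o & u & Ho & Hu). exists o, (pi ^' (K - L) *' u); split; [exact Ho|].
  rewrite Hu, <- (Nat.sub_add L K HL) at 1. rewrite Nat.add_comm, pow_add; ring.
Qed.

Lemma pi_dvd_opp K x : pi_dvd K x -> pi_dvd K (oppZD x).
Proof.
  intro H. replace (oppZD x) with (ofZ (-1) *' x) by
    (apply ZD_ext; unfold ofZ, mulZD, oppZD; cbn [fst snd]; ring).
  now apply pi_dvd_mul_l.
Qed.

Lemma pi_dvd_sub K x y : pi_dvd K x -> pi_dvd K y -> pi_dvd K (x -' y).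
Proof. intros Hx Hy. apply pi_dvd_add; [exact Hx|now apply pi_dvd_opp]. Qed.

Lemma pi_dvd_sub_sym K x y : pi_dvd K (x -' y) -> pi_dvd K (y -' x).
Proof.
  intro H. replace (y -' x) with (oppZD (x -' y)) by
    (apply ZD_ext; unfold subZD, addZD, oppZD; cbn [fst snd]; ring).
  now apply pi_dvd_opp.
Qed.

Lemma pi_eq : pi = if Z.odd D then (1, 1) else (0, 1).
Proof. ramified_cases; reflexivity. Qed.

Lemma pi_dvdb_pi : pi_dvdb D pi = true.
Proof. unfold pi_dvdb; ramified_cases; reflexivity. Qed.

Lemma pi_dvdb_pi_pow k : pi_dvdb D (pi ^' S k) = true.
Proof. now rewrite pow_S, pi_dvdb_mul, pi_dvdb_pi. Qed.

Lemma pi_dvd1_iff x : pi_dvd 1 x <-> pi_dvdb D x = true.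
Proof.
  split.
  - intros (o & y & Ho & E). apply (f_equal (pi_dvdb D)) in E.
    rewrite pow_S, !pi_dvdb_mul, pi_dvdb_ofZ, <- Z.negb_odd, Ho, pi_dvdb_pi in E.
    exact E.
  - destruct x as [a b]; unfold pi_dvd, pi_dvdb; rewrite pow_S, pow_0, pi_eq; cbn [fst snd].
    ramified_cases; cbn [Z.odd]; cbv iota; intro H;
      destruct (proj1 (Z.even_spec _) H) as [t Ht]; rewrite ?Z.add_0_r in Ht.
    + exists 1, (b, t); split; [reflexivity|]; apply ZD_ext; zd_simpl; lia.
    + exists 1, (b, - t); split; [reflexivity|]; apply ZD_ext; zd_simpl; lia.
    + exists 5, (5 * b, t); split; [reflexivity|]; apply ZD_ext; zd_simpl; lia.
    + exists 5, (5 * b, - t); split; [reflexivity|]; apply ZD_ext; zd_simpl; lia.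
    + exists 1, (t, b - t); split; [reflexivity|]; apply ZD_ext; zd_simpl; lia.
    + exists 3, (2 * b + t, b - t); split; [reflexivity|]; apply ZD_ext; zd_simpl; lia.
Qed.

Lemma pi_mul_cancel y y' : pi *' y = pi *' y' -> y = y'.
Proof.
  destruct y as [a b], y' as [c e]; rewrite pi_eq.
  ramified_cases; cbn [Z.odd]; cbv iota; zd_simpl; intro H;
    pose proof (f_equal fst H); pose proof (f_equal snd H); cbn [fst snd] in *;
    apply ZD_ext; cbn [fst snd]; lia.
Qed.

Lemma pi_pow_mul_cancel K y y' : pi ^' K *' y = pi ^' K *' y' -> y = y'.
Proof.
  induction K; intro H.
  - rewrite pow_0 in H. transitivity (oneZD *' y); [ring|]. rewrite H; ring.
  - apply IHK, pi_mul_cancel. rewrite pow_S in H.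
    transitivity (pi *' pi ^' K *' y); [ring|]. rewrite H; ring.
Qed.

Definition pi_val (K : nat) (x : ZD) : Prop :=
  exists o y, Z.odd o = true /\ ofZ o *' x = pi ^' K *' y /\ pi_dvdb D y = false.

Lemma pi_val_dvd K x : pi_val K x -> pi_dvd K x.
Proof. intros (o & y & Ho & E & _). now exists o, y. Qed.

Lemma pi_dvdb_ofZ_odd o : Z.odd o = true -> pi_dvdb D (ofZ o) = false.
Proof. intro H. now rewrite pi_dvdb_ofZ, <- Z.negb_odd, H. Qed.

Lemma pi_val_not_dvd K x : pi_val K x -> ~ pi_dvd (S K) x.
Proof.
  intros (o & y & Ho & E & Hy) (o' & y' & Ho' & E').
  assert (H : pi_dvd 1 (ofZ o' *' y)).
  { exists 1, (ofZ o *' y'); split; [reflexivity|].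
    apply (pi_pow_mul_cancel K).
    transitivity (ofZ o' *' (ofZ o *' x)); [rewrite E; change (ofZ 1) with oneZD; ring|].
    transitivity (ofZ o *' (ofZ o' *' x)); [ring|].
    rewrite E', !pow_S, pow_0; ring. }
  apply pi_dvd1_iff in H. now rewrite pi_dvdb_mul, pi_dvdb_ofZ_odd, Hy in H.
Qed.

Lemma pi_val_of_dvd K x : pi_dvd K x -> ~ pi_dvd (S K) x -> pi_val K x.
Proof.
  intros (o & y & Ho & E) Hn. exists o, y; repeat split; [exact Ho|exact E|].
  destruct (pi_dvdb D y) eqn:Hy; [exfalso|reflexivity].
  apply pi_dvd1_iff in Hy as (o' & y' & Ho' & E').
  apply Hn. exists (o' * o), y'; split; [now apply odd_mul|].
  rewrite ofZ_mul, pow_S.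
  transitivity (ofZ o' *' (ofZ o *' x)); [ring|]. rewrite E.
  transitivity (pi ^' K *' (ofZ o' *' y)); [ring|].
  rewrite E', pow_S, pow_0; ring.
Qed.

Lemma pi_val_mul K L x y : pi_val K x -> pi_val L y -> pi_val (K + L) (x *' y).
Proof.
  intros (o & u & Ho & Eu & Hu) (o' & v & Ho' & Ev & Hv).
  exists (o * o'), (u *' v); repeat split; [now apply odd_mul| |].
  - rewrite ofZ_mul, pow_add.
    transitivity ((ofZ o *' x) *' (ofZ o' *' y)); [ring|]. rewrite Eu, Ev; ring.
  - now rewrite pi_dvdb_mul, Hu, Hv.
Qed.

Lemma pi_val_pi_pow K : pi_val K (pi ^' K).
Proof.
  exists 1, oneZD; split; [reflexivity|split; [|apply pi_dvdb_one]].
  change (ofZ 1) with oneZD; ring.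
Qed.

Lemma pi_val_unit x : pi_dvdb D x = false -> pi_val 0 x.
Proof.
  intro H. exists 1, x; split; [reflexivity|split; [|exact H]].
  change (ofZ 1) with oneZD; rewrite pow_0; ring.
Qed.

Lemma pi_val_two : pi_val 2 (ofZ 2).
Proof.
  unfold pi_val, pi_dvdb; rewrite pi_eq; ramified_cases; cbn [Z.odd]; cbv iota.
  - exists 1, (1, 0); repeat split.
  - exists 1, (-1, 0); repeat split.
  - exists 5, (1, 0); repeat split.
  - exists 5, (-1, 0); repeat split.
  - exists 1, (0, -1); repeat split.
  - exists 9, (-2, -1); repeat split.
Qed.

Lemma pi_sq_two : exists w, pi ^' 2 = ofZ 2 *' w.
Proof.
  rewrite pi_eq; ramified_cases; cbn [Z.odd]; cbv iota.
  - now exists (1, 0).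
  - now exists (-1, 0).
  - now exists (5, 0).
  - now exists (-5, 0).
  - now exists (0, 1).
  - now exists (-2, 1).
Qed.

Lemma pi_dvd_add_val K x y : pi_val K x -> pi_val K y -> pi_dvd (S K) (x +' y).
Proof.
  intros (o & u & Ho & Eu & Hu) (o' & v & Ho' & Ev & Hv).
  assert (Hs : pi_dvdb D (ofZ o' *' u +' ofZ o *' v) = true)
    by now rewrite pi_dvdb_add, !pi_dvdb_mul, !pi_dvdb_ofZ_odd, Hu, Hv.
  apply pi_dvd1_iff in Hs as (o2 & w & Ho2 & Ew).
  exists (o2 * (o * o')), w; split; [now repeat apply odd_mul|].
  rewrite !ofZ_mul, pow_S.
  transitivity (ofZ o2 *' (ofZ o' *' (ofZ o *' x) +' ofZ o *' (ofZ o' *' y))); [ring|].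
  rewrite Eu, Ev.
  transitivity (pi ^' K *' (ofZ o2 *' (ofZ o' *' u +' ofZ o *' v))); [ring|].
  rewrite Ew, pow_S, pow_0; ring.
Qed.

Lemma gcd_pow2_odd o n : Z.odd o = true -> Z.gcd (2 ^ Z.of_nat n) o = 1.
Proof.
  intro Ho. apply Zgcd_1_rel_prime. induction n as [|n IH]; [apply rel_prime_1|].
  rewrite Nat2Z.inj_succ, Z.pow_succ_r by lia.
  apply rel_prime_sym, rel_prime_mult; [|now apply rel_prime_sym].
  apply rel_prime_sym, prime_rel_prime; [apply prime_2|].
  intros [k ->]. now rewrite Z.odd_mul, andb_false_r in Ho.
Qed.

Lemma pi_dvd_two_pow n : pi_dvd (2 * n) (ofZ 2 ^' n).
Proof.
  induction n as [|n IH].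
  - exists 1, oneZD; split; [reflexivity|]. rewrite !pow_0; change (ofZ 1) with oneZD; ring.
  - replace (2 * S n)%nat with (2 + 2 * n)%nat by lia.
    rewrite pow_S. apply pi_dvd_mul; [apply pi_val_dvd, pi_val_two|exact IH].
Qed.

Lemma congr_pi_dvd n x y : congr n x y <-> pi_dvd (2 * n) (x -' y).
Proof.
  split.
  - intros [[a Ha] [b Hb]].
    replace (x -' y) with (ofZ 2 ^' n *' (a, b)).
    + apply pi_dvd_mul_r, pi_dvd_two_pow.
    + rewrite <- ofZ_pow. destruct x, y; apply ZD_ext; zd_simpl; lia.
  - intros (o & Y & Ho & E). destruct pi_sq_two as [w Hw].
    rewrite <- pow_pow, Hw, pow_mul, <- ofZ_pow in E.
    set (Q := w ^' n *' Y).
    assert (E' : ofZ o *' (x -' y) = ofZ (2 ^ Z.of_nat n) *' Q) by (rewrite E; unfold Q; ring).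
    pose proof (f_equal fst E') as E1; pose proof (f_equal snd E') as E2; zd_simpl.
    split; apply (Z.gauss _ o); try now apply gcd_pow2_odd.
    + exists (fst Q). lia.
    + exists (snd Q). lia.
Qed.

Lemma oseq_pi_dvd (x : Oel) n N : (n <= N)%nat -> pi_dvd (2 * n) (oseq x N -' oseq x n).
Proof.
  induction 1 as [|N HN IH].
  - replace (oseq x n -' oseq x n) with zeroZD by ring. apply pi_dvd_0.
  - replace (oseq x (S N) -' oseq x n) with
      ((oseq x (S N) -' oseq x N) +' (oseq x N -' oseq x n)) by ring.
    apply pi_dvd_add; [|exact IH].
    apply (pi_dvd_le (2 * N)); [lia|]. apply congr_pi_dvd, ocoh.
Qed.

(* [oseq u 0] is unconstrained, hence the bound 1 <= n. *)
Definition unitO (u : Oel) : Prop := forall n, (1 <= n)%nat -> pi_dvdb D (oseq u n) = false.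

(** * Hensel's lemma *)

Section Hensel.
Variable m : nat.
Hypothesis hm : Nat.odd m = true.
Local Notation d := (2 * m)%nat.

Lemma pi_val_exponent : pi_val 2 (ofZ (Z.of_nat d)).
Proof.
  rewrite Nat2Z.inj_mul, ofZ_mul. apply (pi_val_mul 2 0); [apply pi_val_two|].
  apply pi_val_unit. rewrite pi_dvdb_ofZ.
  destruct (proj1 (Nat.odd_spec m) hm) as [k ->].
  rewrite Nat2Z.inj_add, Nat2Z.inj_mul, Z.even_add, Z.even_mul. reflexivity.
Qed.

(* The derivative d A z^(d-1) has valuation exactly v(2) = 2, so a correction
   by π^(K-2) changes the value by a term of valuation exactly K. *)
Lemma hensel_step A R z K :
  (5 <= K)%nat -> pi_dvdb D A = false -> pi_dvdb D z = false ->
  pi_val K (A *' z ^' d +' R) -> pi_dvd (S K) (A *' (z +' pi ^' (K - 2)) ^' d +' R).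
Proof.
  intros HK HA Hz Hval.
  set (h := pi ^' (K - 2)).
  assert (Hd : d = S (d - 1)) by (destruct m; [discriminate|lia]).
  destruct (pow_succ_binomial (d - 1) z h) as [P HP]. rewrite <- Hd in HP. rewrite HP.
  replace (A *' (z ^' d +' ofZ (Z.of_nat d) *' z ^' (d - 1) *' h +' h *' h *' P) +' R)
    with ((A *' z ^' d +' R) +' A *' ofZ (Z.of_nat d) *' z ^' (d - 1) *' h +' A *' (h *' h *' P))
    by ring.
  apply pi_dvd_add.
  - apply pi_dvd_add_val; [exact Hval|].
    replace K with (0 + 2 + 0 + (K - 2))%nat at 1 by lia.
    repeat apply pi_val_mul; auto using pi_val_unit, pi_val_exponent, pi_val_pi_pow, pi_dvdb_pow.
  - apply pi_dvd_mul_l, pi_dvd_mul_r. unfold h. rewrite <- pow_add.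
    apply (pi_dvd_le (K - 2 + (K - 2))); [lia|].
    replace (pi ^' (K - 2 + (K - 2))) with (pi ^' (K - 2 + (K - 2)) *' oneZD) by ring.
    apply pi_dvd_pi_pow.
Qed.

Variables U V : Oel.
Hypothesis hU : unitO U.
Hypothesis hUS5 : pi_dvd 5 (oseq U 5 +' oseq V 5).

Let F n z := oseq U n *' z ^' d +' oseq V n.

Lemma F_succ K z : pi_dvd K (F K z) -> pi_dvd K (F (S K) z).
Proof.
  intro H. replace (F (S K) z) with
    (F K z +' ((oseq U (S K) -' oseq U K) *' z ^' d +' (oseq V (S K) -' oseq V K)))
    by (unfold F; ring).
  apply pi_dvd_add; [exact H|].
  apply pi_dvd_add; [apply pi_dvd_mul_r|]; apply (pi_dvd_le (2 * K)); try lia;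
    apply oseq_pi_dvd; lia.
Qed.

Fixpoint hensel_approx (n : nat) : ZD :=
  match n with
  | O => oneZD
  | S n =>
      let z := hensel_approx n in
      if excluded_middle_informative (pi_dvd (S (n + 5)) (F (S (n + 5)) z)) then z
      else z +' pi ^' (n + 3)
  end.

Lemma hensel_approx_spec n :
  pi_dvd (n + 5) (F (n + 5) (hensel_approx n)) /\ pi_dvdb D (hensel_approx n) = false.
Proof.
  induction n as [|n [IH Hu]]; cbn [hensel_approx Nat.add].
  - split; [|apply pi_dvdb_one]. unfold F. rewrite pow_one.
    replace (oseq U 5 *' oneZD +' oseq V 5) with (oseq U 5 +' oseq V 5) by ring. exact hUS5.
  - destruct (excluded_middle_informative _) as [Hv|Hv]; [split; assumption|split].
    + replace (n + 3)%nat with (n + 5 - 2)%nat by lia.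
      apply hensel_step; [lia|apply hU; lia|exact Hu|].
      apply pi_val_of_dvd; [apply F_succ, IH|exact Hv].
    + replace (n + 3)%nat with (S (n + 2)) by lia.
      now rewrite pi_dvdb_add, Hu, pi_dvdb_pi_pow.
Qed.

Lemma hensel_approx_succ n : pi_dvd (n + 3) (hensel_approx (S n) -' hensel_approx n).
Proof.
  cbn [hensel_approx]. destruct (excluded_middle_informative _).
  - replace (hensel_approx n -' hensel_approx n) with zeroZD by ring. apply pi_dvd_0.
  - replace (hensel_approx n +' pi ^' (n + 3) -' hensel_approx n)
      with (pi ^' (n + 3) *' oneZD) by ring.
    apply pi_dvd_pi_pow.
Qed.

Lemma hensel_approx_coh n : congr n (hensel_approx (2 * S n)) (hensel_approx (2 * n)).
Proof.
  apply congr_pi_dvd. replace (2 * S n)%nat with (S (S (2 * n))) by lia.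
  replace (hensel_approx (S (S (2 * n))) -' hensel_approx (2 * n)) with
    ((hensel_approx (S (S (2 * n))) -' hensel_approx (S (2 * n))) +'
     (hensel_approx (S (2 * n)) -' hensel_approx (2 * n))) by ring.
  apply pi_dvd_add; (eapply pi_dvd_le; [|apply hensel_approx_succ]); lia.
Qed.

Lemma hensel : exists z : Oel, unitO z /\
  forall n, pi_dvd (2 * n) (oseq U n *' oseq z n ^' d +' oseq V n).
Proof.
  exists (Build_Oel (fun n => hensel_approx (2 * n)) hensel_approx_coh); cbn [oseq].
  split; [intros n _; apply hensel_approx_spec|].
  intro n. destruct (hensel_approx_spec (2 * n)) as [Hroot _].
  set (v := hensel_approx (2 * n)) in *. fold (F n v).
  replace (F n v) with (F (2 * n + 5) v -' ((oseq U (2 * n + 5) -' oseq U n) *' v ^' d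
      +' (oseq V (2 * n + 5) -' oseq V n))) by (unfold F; ring).
  apply pi_dvd_sub; [eapply pi_dvd_le; [|exact Hroot]; lia|].
  apply pi_dvd_add; [apply pi_dvd_mul_r|]; apply oseq_pi_dvd; lia.
Qed.

End Hensel.

Lemma res5_spec x : pi_dvd 5 (x -' res5 D x).
Proof.
  set (t := snd x / 4). set (q := (fst x - 4 * t * fst pi) / 8).
  assert (Hpi : snd pi = 1) by (rewrite pi_eq; now destruct (Z.odd D)).
  replace (x -' res5 D x) with (ofZ 2 ^' 3 *' ofZ q +' ofZ 2 ^' 2 *' pi *' ofZ t).
  - apply pi_dvd_add.
    + apply pi_dvd_mul_r, (pi_dvd_le 6); [lia|apply (pi_dvd_two_pow 3)].
    + apply pi_dvd_mul_r, (pi_dvd_mul 4 1); [apply (pi_dvd_two_pow 2)|].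
      exists 1, oneZD; split; [reflexivity|]. rewrite pow_S, pow_0.
      change (ofZ 1) with oneZD; ring.
  - rewrite <- !ofZ_pow. destruct x as [a b], pi as [p p'] eqn:Ep.
    unfold res5, q, t in *; rewrite Ep; cbn [fst snd] in *; subst p'.
    apply ZD_ext; zd_simpl; Z.div_mod_to_equations; lia.
Qed.

Lemma pi_dvd5_of_res5 x : res5 D x = zeroZD -> pi_dvd 5 x.
Proof.
  intro H. pose proof (res5_spec x) as Hx. rewrite H in Hx.
  replace x with (x -' zeroZD) by ring. exact Hx.
Qed.

Lemma in_Z_range z n : 0 <= z < Z.of_nat n -> In z (map Z.of_nat (seq 0 n)).
Proof.
  intro H. apply in_map_iff. exists (Z.to_nat z).
  split; [apply Z2Nat.id; lia|apply in_seq; lia].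
Qed.

Lemma res5_in x : In (res5 D x) residues5.
Proof.
  apply in_prod; apply in_Z_range; apply Z.mod_pos_bound; lia.
Qed.

Lemma congr1_res5 x : congr 1 (res5 D x) x.
Proof. apply congr_pi_dvd, pi_dvd_sub_sym, (pi_dvd_le 5); [lia|now apply res5_spec]. Qed.

Lemma congr2b_of_congr x y : congr 1 x y -> congr2b x y = true.
Proof.
  intros [[a Ha] [b Hb]]. unfold congr2b. change (2 ^ Z.of_nat 1) with 2 in *.
  rewrite Ha, Hb, !Z.even_mul, !orb_true_r. reflexivity.
Qed.

Lemma res5_digit_residues c u :
  congr 1 u (oneZD +' digit_pi D c) -> In (res5 D u) (digit_residues D c).
Proof.
  intro H. apply filter_In; split; [apply res5_in|].
  apply congr2b_of_congr, congr_pi_dvd.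
  replace (res5 D u -' (oneZD +' digit_pi D c)) with
    ((res5 D u -' u) +' (u -' (oneZD +' digit_pi D c))) by ring.
  apply pi_dvd_add; apply congr_pi_dvd; [apply congr1_res5|exact H].
Qed.

Lemma pi_dvdb_res5 u : pi_dvdb D (res5 D u) = pi_dvdb D u.
Proof.
  assert (H : pi_dvdb D (u -' res5 D u) = true)
    by (apply pi_dvd1_iff, (pi_dvd_le 5); [lia|now apply res5_spec]).
  rewrite pi_dvdb_sub in H. now destruct (pi_dvdb D u), (pi_dvdb D (res5 D u)).
Qed.

Lemma res5_unit_residues u : pi_dvdb D u = false -> In (res5 D u) (unit_residues D).
Proof.
  intro H. apply filter_In; split; [apply res5_in|]. now rewrite pi_dvdb_res5, H.
Qed.

Lemma pair_term_res5 u1 u2 e :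
  pi_dvd 5 (pair_term D u1 u2 e -' res5 D (pair_term D (res5 D u1) (res5 D u2) e)).
Proof.
  set (P := pair_term D (res5 D u1) (res5 D u2) e).
  replace (pair_term D u1 u2 e -' res5 D P) with
    ((u1 -' res5 D u1) *' dpow_res D (fst e) +' (u2 -' res5 D u2) *' dpow_res D (snd e)
     +' (P -' res5 D P)) by (unfold P, pair_term; ring).
  apply pi_dvd_add; [apply pi_dvd_add; apply pi_dvd_mul_r|]; now apply res5_spec.
Qed.

Lemma single_term_res5 j u e :
  pi_dvd 5 (single_term D j u e -' res5 D (single_term D j (res5 D u) e)).
Proof.
  set (P := single_term D j (res5 D u) e).
  replace (single_term D j u e -' res5 D P) with
    ((u -' res5 D u) *' (pi ^' j *' dpow_res D e) +' (P -' res5 D P))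
    by (unfold P, single_term; ring).
  apply pi_dvd_add; [apply pi_dvd_mul_r|]; now apply res5_spec.
Qed.

Lemma solvable_spec p1 p2 f : solvable D p1 p2 f = true ->
  exists v1 v2 v5, In v1 p1 /\ In v2 p2 /\ In v5 f /\
    (fst (fst v1) <> 0 \/ fst (fst v2) <> 0)%nat /\
    res5 D (snd v1 +' snd v2 +' snd v5) = zeroZD.
Proof.
  unfold solvable. intros (v1 & I1 & H)%existsb_exists.
  apply existsb_exists in H as (v2 & I2 & H).
  apply existsb_exists in H as (v5 & I5 & H).
  apply andb_prop in H as [Hnz Hz].
  exists v1, v2, v5; repeat split; auto.
  - destruct (Nat.eqb_spec (fst (fst v1)) 0), (Nat.eqb_spec (fst (fst v2)) 0);
      [discriminate|lia..].
  - unfold is_zero5 in Hz. now destruct (ZD_eq_dec _ _).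
Qed.

Lemma pair_profile_in c u1 u2 :
  congr 1 u1 (oneZD +' digit_pi D c) -> congr 1 u2 (oneZD +' digit_pi D c) ->
  In (pair_profile D (res5 D u1, res5 D u2)) (pair_profiles D c).
Proof.
  intros h1 h2. apply nodup_In, in_map, in_prod; now apply res5_digit_residues.
Qed.

Lemma single_profile_in j u :
  pi_dvdb D u = false -> In (single_profile D j (res5 D u)) (single_profiles D j).
Proof. intro h. apply nodup_In, in_map. now apply res5_unit_residues. Qed.

Lemma residue_solution j c c' (hj : In j [2; 3; 4]%nat) u1 u2 u3 u4 u5 :
  congr 1 u1 (oneZD +' digit_pi D c) -> congr 1 u2 (oneZD +' digit_pi D c) ->
  congr 1 u3 (oneZD +' digit_pi D c') -> congr 1 u4 (oneZD +' digit_pi D c') ->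
  pi_dvdb D u5 = false ->
  exists e1 e2 e5, (fst e1 <> 0 \/ fst e2 <> 0)%nat /\
    pi_dvd 5 (pair_term D u1 u2 e1 +' pair_term D u3 u4 e2 +' single_term D j u5 e5).
Proof.
  intros h1 h2 h3 h4 h5.
  destruct (solvable_spec _ _ _ (residue_check_spec D j c c' _ _ _ (residue_check_ok D hD) hj
    (pair_profile_in c u1 u2 h1 h2) (pair_profile_in c' u3 u4 h3 h4) (single_profile_in j u5 h5)))
    as (v1 & v2 & v5 & I1 & I2 & I5 & Hnz & Hz).
  apply in_map_iff in I1 as (e1 & <- & _).
  apply in_map_iff in I2 as (e2 & <- & _).
  apply in_map_iff in I5 as (e5 & <- & _).
  cbn [fst snd] in *. exists e1, e2, e5. split; [exact Hnz|].
  apply pi_dvd5_of_res5 in Hz.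
  set (P1 := pair_term D (res5 D u1) (res5 D u2) e1).
  set (P2 := pair_term D (res5 D u3) (res5 D u4) e2).
  set (P5 := single_term D j (res5 D u5) e5).
  replace (pair_term D u1 u2 e1 +' pair_term D u3 u4 e2 +' single_term D j u5 e5) with
    ((pair_term D u1 u2 e1 -' res5 D P1) +' (pair_term D u3 u4 e2 -' res5 D P2) +'
     (single_term D j u5 e5 -' res5 D P5) +' (res5 D P1 +' res5 D P2 +' res5 D P5)) by ring.
  apply pi_dvd_add; [|exact Hz].
  apply pi_dvd_add; [apply pi_dvd_add|]; auto using pair_term_res5, single_term_res5.
Qed.

Definition splits (a : Oel) (r : nat) (u : Oel) : Prop :=
  eqS (oseq a) (fun n => pi ^' r *' oseq u n).

Lemma unit_of_digit c x : congr 1 x (oneZD +' digit_pi D c) -> pi_dvdb D x = false.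
Proof.
  intro H. apply congr_pi_dvd, (pi_dvd_le _ 1) in H; [|lia].
  apply pi_dvd1_iff in H.
  assert (Hc : pi_dvdb D (digit_pi D c) = true)
    by (unfold digit_pi; now rewrite pi_dvdb_mul, pi_dvdb_pi, orb_true_r).
  rewrite pi_dvdb_sub, pi_dvdb_add, pi_dvdb_one, Hc in H.
  now destruct (pi_dvdb D x).
Qed.

Lemma level_coef_splits d a l c : level_coef D d a l c ->
  exists r u, Nat.modulo r d = Nat.modulo l d /\ splits a r u /\ unitO u /\
    congr 1 (oseq u 5) (oneZD +' digit_pi D c).
Proof.
  intros (r & (u & _ & Ha & w & Hw) & Hr).
  assert (Hdigit : forall n, (1 <= n)%nat -> congr 1 (oseq u n) (oneZD +' digit_pi D c)).
  { intros n Hn. apply congr_pi_dvd.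
    replace (oseq u n -' (oneZD +' digit_pi D c)) with
      ((oseq u n -' (oneZD +' digit_pi D c +' pi ^' 2 *' oseq w n)) +' pi ^' 2 *' oseq w n)
      by (unfold digit_pi; ring).
    apply pi_dvd_add; [|apply pi_dvd_pi_pow].
    apply (pi_dvd_le (2 * n)); [lia|]. apply congr_pi_dvd, Hw. }
  exists r, u; split; [exact Hr|]; split; [exact Ha|]; split; [|apply Hdigit; lia].
  intros n Hn. apply (unit_of_digit c), Hdigit, Hn.
Qed.

Lemma splits_exponent_le a r u r' u' :
  splits a r u -> splits a r' u' -> unitO u' -> (r <= r')%nat.
Proof.
  intros Ha Ha' Hu'. destruct (Nat.le_gt_cases r r') as [|Hlt]; [assumption|exfalso].
  set (n := S r).
  assert (Hd : pi_dvd (2 * n) (pi ^' r *' oseq u n -' pi ^' r' *' oseq u' n)).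
  { specialize (Ha n). specialize (Ha' n). apply congr_pi_dvd in Ha, Ha'.
    replace (pi ^' r *' oseq u n -' pi ^' r' *' oseq u' n) with
      ((oseq a n -' pi ^' r' *' oseq u' n) -' (oseq a n -' pi ^' r *' oseq u n)) by ring.
    now apply pi_dvd_sub. }
  replace (pi ^' r *' oseq u n -' pi ^' r' *' oseq u' n)
    with (pi ^' r' *' (pi ^' (r - r') *' oseq u n -' oseq u' n)) in Hd
    by (replace (pi ^' r) with (pi ^' r' *' pi ^' (r - r'))
          by (rewrite <- pow_add; f_equal; lia); ring).
  refine (pi_val_not_dvd r' _ _ (pi_dvd_le _ _ _ _ Hd)); [|unfold n; lia].
  rewrite <- (Nat.add_0_r r') at 1.
  apply pi_val_mul; [apply pi_val_pi_pow|apply pi_val_unit].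
  replace (r - r')%nat with (S (r - r' - 1)) by lia.
  rewrite pi_dvdb_sub, pi_dvdb_mul, pi_dvdb_pi_pow, (Hu' n) by (unfold n; lia).
  reflexivity.
Qed.

Lemma splits_exponent_unique a r u r' u' :
  splits a r u -> splits a r' u' -> unitO u -> unitO u' -> r = r'.
Proof.
  intros Ha Ha' Hu Hu'.
  apply Nat.le_antisymm; [eapply splits_exponent_le|eapply splits_exponent_le]; eauto.
Qed.

(** * Construction of the zero *)

Definition sumL (l : list nat) (F : nat -> ZD) : ZD :=
  fold_right (fun i acc => F i +' acc) zeroZD l.

Lemma sumL_cons i l F : sumL (i :: l) F = F i +' sumL l F.
Proof. reflexivity. Qed.

Lemma sumL_ext l F G : (forall i, F i = G i) -> sumL l F = sumL l G.
Proof. intro H. induction l as [|i l IH]; [reflexivity|]. now rewrite !sumL_cons, H, IH. Qed.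

Lemma sumL_add l F G : sumL l (fun i => F i +' G i) = sumL l F +' sumL l G.
Proof. induction l as [|i l IH]; [cbn|rewrite !sumL_cons, IH]; ring. Qed.

Lemma sumL_delta_notin l p v : ~ In p l ->
  sumL l (fun i => if Nat.eqb i p then v else zeroZD) = zeroZD.
Proof.
  induction l as [|i l IH]; intro Hp; [reflexivity|]. rewrite sumL_cons.
  destruct (Nat.eqb_spec i p) as [->|]; [now destruct Hp; left|].
  rewrite IH by (intro; apply Hp; now right). ring.
Qed.

Lemma sumL_delta l p v : NoDup l -> In p l ->
  sumL l (fun i => if Nat.eqb i p then v else zeroZD) = v.
Proof.
  induction 1 as [|i l Hi Hl IH]; [contradiction|]. intros Hp; rewrite sumL_cons.
  destruct (Nat.eqb_spec i p) as [->|Hne].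
  - rewrite sumL_delta_notin by exact Hi. ring.
  - destruct Hp as [->|Hp]; [contradiction|]. rewrite IH by exact Hp. ring.
Qed.

Definition pointsO (L : list (nat * Oel)) (i : nat) : Oel :=
  fold_right (fun pX x => if Nat.eqb i (fst pX) then snd pX else x) (constO zeroZD) L.

Definition form_value (d : nat) (a : nat -> Oel) (L : list (nat * Oel)) (n : nat) : ZD :=
  fold_right (fun pX acc => oseq (a (fst pX)) n *' oseq (snd pX) n ^' d +' acc) zeroZD L.

Lemma pointsO_cons p X L i :
  pointsO ((p, X) :: L) i = if Nat.eqb i p then X else pointsO L i.
Proof. reflexivity. Qed.

Lemma pointsO_notin L i : ~ In i (map fst L) -> pointsO L i = constO zeroZD.
Proof.
  induction L as [|[p X] L IH]; intro Hi; [reflexivity|]. rewrite pointsO_cons.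
  destruct (Nat.eqb_spec i p) as [->|]; [now destruct Hi; left|].
  apply IH. intro; apply Hi; now right.
Qed.

Lemma zero_pow d : (0 < d)%nat -> zeroZD ^' d = zeroZD.
Proof. intro Hd. destruct d as [|d]; [lia|]. rewrite pow_S. ring. Qed.

Lemma sumL_pointsO d a L l n : (0 < d)%nat -> NoDup (map fst L) -> NoDup l ->
  (forall p, In p (map fst L) -> In p l) ->
  sumL l (fun i => oseq (a i) n *' oseq (pointsO L i) n ^' d) = form_value d a L n.
Proof.
  intros Hd. induction L as [|[p X] L IH]; intros HL Hl Hin.
  - cbn. rewrite (sumL_ext _ _ (fun _ => zeroZD)).
    + clear Hl Hin. induction l; [reflexivity|]. rewrite sumL_cons, IHl. ring.
    + intro i. cbn. rewrite zero_pow by exact Hd. ring.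
  - cbn [map fst] in HL, Hin. inversion_clear HL as [|? ? Hp HL'].
    rewrite (sumL_ext _ _ (fun i => (if Nat.eqb i p then oseq (a p) n *' oseq X n ^' d else zeroZD)
       +' oseq (a i) n *' oseq (pointsO L i) n ^' d)).
    + rewrite sumL_add, sumL_delta, IH; try assumption; [reflexivity| |apply Hin; now left].
      intros q Hq; apply Hin; now right.
    + intro i. rewrite pointsO_cons. destruct (Nat.eqb_spec i p) as [->|]; [|ring].
      rewrite pointsO_notin, zero_pow by assumption. cbn. ring.
Qed.

Lemma maxl_const0 s : maxl s (fun _ => 0%nat) = 0%nat.
Proof. induction s as [|s IH]; [reflexivity|]. cbn. now rewrite IH. Qed.

Lemma has_zero_of_points d s a p X L : (0 < d)%nat ->
  NoDup (p :: map fst L) -> (forall q, In q (p :: map fst L) -> (q < s)%nat) ->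
  ~ eqS (oseq X) (fun _ => zeroZD) ->
  (forall n, pi_dvd (2 * n) (form_value d a ((p, X) :: L) n)) ->
  has_nontrivial_zero_K D d s a.
Proof.
  intros Hd Hnd Hlt HX Hzero.
  (* No denominators are needed: the zero lies in O^s. *)
  exists (pointsO ((p, X) :: L)), (fun _ => 0%nat). split.
  - exists p. split; [apply Hlt; now left|]. now rewrite pointsO_cons, Nat.eqb_refl.
  - intro n. rewrite maxl_const0. apply congr_pi_dvd.
    change (sumZD s ?F) with (sumL (seq 0 s) F).
    rewrite (sumL_ext _ _ (fun i => oseq (a i) n *' oseq (pointsO ((p, X) :: L) i) n ^' d)).
    + rewrite sumL_pointsO; auto using seq_NoDup.
      * replace (form_value d a ((p, X) :: L) n -' zeroZD)
          with (form_value d a ((p, X) :: L) n) by ring. apply Hzero.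
      * intros q Hq. apply in_seq. specialize (Hlt q Hq). lia.
    + intro i. rewrite Nat.sub_diag. change (ofZ (2 ^ Z.of_nat (0 * d))) with oneZD. ring.
Qed.

Lemma splits_pow_term d a r u t w n : splits a r u ->
  pi_dvd (2 * n) (oseq a n *' (pi ^' t *' w) ^' d -' pi ^' (r + d * t) *' oseq u n *' w ^' d).
Proof.
  intro Ha.
  replace (oseq a n *' (pi ^' t *' w) ^' d -' pi ^' (r + d * t) *' oseq u n *' w ^' d)
    with ((oseq a n -' pi ^' r *' oseq u n) *' (pi ^' t *' w) ^' d)
    by (rewrite pow_mul, pow_pow, pow_add, (Nat.mul_comm d t); ring).
  apply pi_dvd_mul_r, congr_pi_dvd, Ha.
Qed.

Lemma exists_shift d r E : (0 < d)%nat -> Nat.modulo r d = Nat.modulo E d -> (r <= E)%nat ->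
  exists t, (r + d * t = E)%nat.
Proof.
  intros Hd Hmod HrE. exists ((E - r) / d)%nat.
  pose proof (Nat.div_mod_eq r d). pose proof (Nat.div_mod_eq E d).
  assert (r / d <= E / d)%nat by (apply Nat.Div0.div_le_mono; lia).
  replace (E - r)%nat with (d * (E / d - r / d))%nat by nia.
  rewrite (Nat.mul_comm d (E / d - r / d)), Nat.div_mul by lia. nia.
Qed.

Lemma mod_add_ne d k j : (0 < j < d)%nat -> Nat.modulo k d <> Nat.modulo (k + j) d.
Proof.
  intros Hj Hmod. destruct (exists_shift d k (k + j)) as [t Ht]; [lia|exact Hmod|lia|].
  destruct t; nia.
Qed.

Lemma index_ne_of_levels d (a : nat -> Oel) i i' k j r u r' u' : (0 < j < d)%nat ->
  splits (a i) r u -> splits (a i') r' u' -> unitO u -> unitO u' ->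
  Nat.modulo r d = Nat.modulo k d -> Nat.modulo r' d = Nat.modulo (k + j) d -> i <> i'.
Proof.
  intros Hj Ha Ha' Hu Hu' Hr Hr' <-. apply (mod_add_ne d k j Hj).
  rewrite <- Hr, <- Hr'. f_equal. eapply splits_exponent_unique; eauto.
Qed.

Lemma scaleO_nonzero t y z : pi_dvdb D y = false -> unitO z ->
  ~ eqS (oseq (scaleO D (pi ^' t) (scaleO D y z))) (fun _ => zeroZD).
Proof.
  intros Hy Hz H0. specialize (H0 (S t)). apply congr_pi_dvd in H0. cbn [oseq scaleO] in H0.
  apply (pi_val_not_dvd t (pi ^' t *' (y *' oseq z (S t)))).
  - rewrite <- (Nat.add_0_r t) at 1. apply pi_val_mul; [apply pi_val_pi_pow|apply pi_val_unit].
    rewrite pi_dvdb_mul, Hy, Hz by lia. reflexivity.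
  - apply (pi_dvd_le (2 * S t)); [lia|].
    replace (pi ^' t *' (y *' oseq z (S t))) with (pi ^' t *' (y *' oseq z (S t)) -' zeroZD)
      by ring.
    exact H0.
Qed.

Section FiveVariables.
Variable m : nat.
Hypothesis hm : Nat.odd m = true.
Local Notation d := (2 * m)%nat.

Definition yc (e : nat) : ZD :=
  match e with O => zeroZD | 1%nat => oneZD | _ => one_plus_pi D end.

Definition form5 (j : nat) (u1 u2 u3 u4 u5 w1 w2 w3 w4 w5 : ZD) : ZD :=
  u1 *' w1 ^' d +' u2 *' w2 ^' d +' u3 *' w3 ^' d +' u4 *' w4 ^' d +' pi ^' j *' u5 *' w5 ^' d.

Lemma pi_dvdb_yc e : e <> 0%nat -> pi_dvdb D (yc e) = false.
Proof.
  intro He. destruct e as [|[|e]]; [contradiction|apply pi_dvdb_one|].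
  cbn. unfold one_plus_pi. now rewrite pi_dvdb_add, pi_dvdb_one, pi_dvdb_pi.
Qed.

Lemma pi_dvd_pow_sub_one x k K : pi_dvd K (x -' oneZD) -> pi_dvd K (x ^' k -' oneZD).
Proof.
  intro H. induction k as [|k IH].
  - replace (x ^' 0 -' oneZD) with zeroZD by (rewrite pow_0; ring). apply pi_dvd_0.
  - replace (x ^' S k -' oneZD) with (x *' (x ^' k -' oneZD) +' (x -' oneZD))
      by (rewrite pow_S; ring).
    apply pi_dvd_add; [apply pi_dvd_mul_l|]; assumption.
Qed.

(* Since d = 4k + 2 and (1 + π)^4 ≡ 1 mod π^5, (1 + π)^d ≡ (1 + π)^2. *)
Lemma yc_pow e : pi_dvd 5 (yc e ^' d -' dpow_res D e).
Proof.
  destruct (proj1 (Nat.odd_spec m) hm) as [k Hk].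
  destruct e as [|[|e]]; cbn [yc dpow_res].
  - replace (zeroZD ^' d -' zeroZD) with zeroZD by (rewrite zero_pow by lia; ring).
    apply pi_dvd_0.
  - replace (oneZD ^' d -' oneZD) with zeroZD by (rewrite pow_one; ring). apply pi_dvd_0.
  - replace d with (4 * k + 2)%nat by lia. rewrite pow_add, <- pow_pow.
    replace ((one_plus_pi D ^' 4) ^' k *' one_plus_pi D ^' 2 -' one_plus_pi D ^' 2)
      with (((one_plus_pi D ^' 4) ^' k -' oneZD) *' one_plus_pi D ^' 2) by ring.
    apply pi_dvd_mul_r, pi_dvd_pow_sub_one, pi_dvd5_of_res5, one_plus_pi_pow4, hD.
Qed.

Lemma residue_root j (u1 u2 u3 u4 u5 : Oel) e1 e2 e5 :
  unitO u1 -> fst e1 <> 0%nat ->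
  pi_dvd 5 (pair_term D (oseq u1 5) (oseq u2 5) e1 +' pair_term D (oseq u3 5) (oseq u4 5) e2 +'
            single_term D j (oseq u5 5) e5) ->
  exists z : Oel, unitO z /\ forall n, pi_dvd (2 * n)
    (form5 j (oseq u1 n) (oseq u2 n) (oseq u3 n) (oseq u4 n) (oseq u5 n)
       (yc (fst e1) *' oseq z n) (yc (snd e1)) (yc (fst e2)) (yc (snd e2)) (yc e5)).
Proof.
  intros Hu1 He1 Hres.
  set (y1 := yc (fst e1)). set (y2 := yc (snd e1)). set (y3 := yc (fst e2)).
  set (y4 := yc (snd e2)). set (y5 := yc e5).
  set (U := scaleO D (y1 ^' d) u1).
  set (V := addO (scaleO D (y2 ^' d) u2) (addO (scaleO D (y3 ^' d) u3)
              (addO (scaleO D (y4 ^' d) u4) (scaleO D (pi ^' j *' y5 ^' d) u5)))).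
  destruct (hensel m hm U V) as [z [Hz Hroot]].
  - intros n Hn. cbn [U oseq scaleO].
    now rewrite pi_dvdb_mul, pi_dvdb_pow, Hu1 by (apply pi_dvdb_yc, He1 || lia).
  - cbn [U V oseq scaleO addO].
    replace (y1 ^' d *' oseq u1 5 +' (y2 ^' d *' oseq u2 5 +' (y3 ^' d *' oseq u3 5 +'
        (y4 ^' d *' oseq u4 5 +' pi ^' j *' y5 ^' d *' oseq u5 5)))) with
      ((pair_term D (oseq u1 5) (oseq u2 5) e1 +' pair_term D (oseq u3 5) (oseq u4 5) e2 +'
        single_term D j (oseq u5 5) e5) +'
       (oseq u1 5 *' (y1 ^' d -' dpow_res D (fst e1)) +'
        oseq u2 5 *' (y2 ^' d -' dpow_res D (snd e1)) +'
        oseq u3 5 *' (y3 ^' d -' dpow_res D (fst e2)) +'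
        oseq u4 5 *' (y4 ^' d -' dpow_res D (snd e2)) +'
        pi ^' j *' oseq u5 5 *' (y5 ^' d -' dpow_res D e5)))
      by (unfold pair_term, single_term; cbn [fst snd]; ring).
    apply pi_dvd_add; [exact Hres|].
    repeat apply pi_dvd_add; apply pi_dvd_mul_l, yc_pow.
  - exists z. split; [exact Hz|]. intro n. specialize (Hroot n).
    cbn [U V oseq scaleO addO] in Hroot. unfold form5.
    replace (oseq u1 n *' (y1 *' oseq z n) ^' d +' oseq u2 n *' y2 ^' d +' oseq u3 n *' y3 ^' d +'
             oseq u4 n *' y4 ^' d +' pi ^' j *' oseq u5 n *' y5 ^' d)
      with (y1 ^' d *' oseq u1 n *' oseq z n ^' d +' (y2 ^' d *' oseq u2 n +'
            (y3 ^' d *' oseq u3 n +' (y4 ^' d *' oseq u4 n +' pi ^' j *' y5 ^' d *' oseq u5 n))))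
      by (rewrite pow_mul; ring).
    exact Hroot.
Qed.

Lemma zero_of_root s (a : nat -> Oel) i1 i2 i3 i4 i5 k j r1 r2 r3 r4 r5
  (u1 u2 u3 u4 u5 z : Oel) y1 y2 y3 y4 y5 :
  NoDup [i1; i2; i3; i4; i5] -> (forall i, In i [i1; i2; i3; i4; i5] -> (i < s)%nat) ->
  splits (a i1) r1 u1 -> splits (a i2) r2 u2 -> splits (a i3) r3 u3 ->
  splits (a i4) r4 u4 -> splits (a i5) r5 u5 ->
  Nat.modulo r1 d = Nat.modulo k d -> Nat.modulo r2 d = Nat.modulo k d ->
  Nat.modulo r3 d = Nat.modulo k d -> Nat.modulo r4 d = Nat.modulo k d ->
  Nat.modulo r5 d = Nat.modulo (k + j) d ->
  pi_dvdb D y1 = false -> unitO z ->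
  (forall n, pi_dvd (2 * n) (form5 j (oseq u1 n) (oseq u2 n) (oseq u3 n) (oseq u4 n) (oseq u5 n)
                               (y1 *' oseq z n) y2 y3 y4 y5)) ->
  has_nontrivial_zero_K D d s a.
Proof.
  intros Hnd Hlt S1 S2 S3 S4 S5 R1 R2 R3 R4 R5 Hy1 Hz Hroot.
  assert (Hd : (0 < d)%nat) by (destruct m; [discriminate|lia]).
  (* A common exponent, reachable from every r_i in steps of d. *)
  set (E := (k + d * (r1 + r2 + r3 + r4 + r5))%nat).
  assert (HE : Nat.modulo E d = Nat.modulo k d)
    by (unfold E; rewrite Nat.mul_comm, Nat.Div0.mod_add; reflexivity).
  assert (HEj : Nat.modulo (E + j) d = Nat.modulo (k + j) d)
    by (rewrite Nat.Div0.add_mod, HE, <- Nat.Div0.add_mod; reflexivity).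
  destruct (exists_shift d r1 E) as [t1 T1]; [lia|congruence|unfold E; nia|].
  destruct (exists_shift d r2 E) as [t2 T2]; [lia|congruence|unfold E; nia|].
  destruct (exists_shift d r3 E) as [t3 T3]; [lia|congruence|unfold E; nia|].
  destruct (exists_shift d r4 E) as [t4 T4]; [lia|congruence|unfold E; nia|].
  destruct (exists_shift d r5 (E + j)) as [t5 T5]; [lia|congruence|unfold E; nia|].
  apply (has_zero_of_points d s a i1 (scaleO D (pi ^' t1) (scaleO D y1 z))
    [(i2, constO (pi ^' t2 *' y2)); (i3, constO (pi ^' t3 *' y3));
     (i4, constO (pi ^' t4 *' y4)); (i5, constO (pi ^' t5 *' y5))]);
    [exact Hd|exact Hnd|exact Hlt|now apply scaleO_nonzero|].
  intro n. cbn [form_value fold_right fst snd oseq scaleO constO].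
  pose proof (splits_pow_term d _ _ _ t1 (y1 *' oseq z n) n S1) as G1.
  pose proof (splits_pow_term d _ _ _ t2 y2 n S2) as G2.
  pose proof (splits_pow_term d _ _ _ t3 y3 n S3) as G3.
  pose proof (splits_pow_term d _ _ _ t4 y4 n S4) as G4.
  pose proof (splits_pow_term d _ _ _ t5 y5 n S5) as G5.
  rewrite T1 in G1; rewrite T2 in G2; rewrite T3 in G3; rewrite T4 in G4;
    rewrite T5, pow_add in G5.
  set (B := form5 j (oseq u1 n) (oseq u2 n) (oseq u3 n) (oseq u4 n) (oseq u5 n)
              (y1 *' oseq z n) y2 y3 y4 y5) in Hroot.
  match goal with |- pi_dvd _ ?S => replace S with
    ((oseq (a i1) n *' (pi ^' t1 *' (y1 *' oseq z n)) ^' d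
        -' pi ^' E *' oseq u1 n *' (y1 *' oseq z n) ^' d) +'
     (oseq (a i2) n *' (pi ^' t2 *' y2) ^' d -' pi ^' E *' oseq u2 n *' y2 ^' d) +'
     (oseq (a i3) n *' (pi ^' t3 *' y3) ^' d -' pi ^' E *' oseq u3 n *' y3 ^' d) +'
     (oseq (a i4) n *' (pi ^' t4 *' y4) ^' d -' pi ^' E *' oseq u4 n *' y4 ^' d) +'
     (oseq (a i5) n *' (pi ^' t5 *' y5) ^' d -' pi ^' E *' pi ^' j *' oseq u5 n *' y5 ^' d) +'
     pi ^' E *' B) by (unfold B, form5; ring) end.
  apply pi_dvd_add; [|now apply pi_dvd_mul_l].
  apply pi_dvd_add; [|exact G5]. apply pi_dvd_add; [|exact G4].
  apply pi_dvd_add; [|exact G3]. apply pi_dvd_add; [exact G1|exact G2].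
Qed.

Lemma zero_of_residue_solution s (a : nat -> Oel) i1 i2 i3 i4 i5 k j r1 r2 r3 r4 r5
  (u1 u2 u3 u4 u5 : Oel) e1 e2 e5 :
  NoDup [i1; i2; i3; i4; i5] -> (forall i, In i [i1; i2; i3; i4; i5] -> (i < s)%nat) ->
  splits (a i1) r1 u1 -> splits (a i2) r2 u2 -> splits (a i3) r3 u3 ->
  splits (a i4) r4 u4 -> splits (a i5) r5 u5 ->
  Nat.modulo r1 d = Nat.modulo k d -> Nat.modulo r2 d = Nat.modulo k d ->
  Nat.modulo r3 d = Nat.modulo k d -> Nat.modulo r4 d = Nat.modulo k d ->
  Nat.modulo r5 d = Nat.modulo (k + j) d ->
  unitO u1 -> unitO u3 -> (fst e1 <> 0 \/ fst e2 <> 0)%nat ->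
  pi_dvd 5 (pair_term D (oseq u1 5) (oseq u2 5) e1 +' pair_term D (oseq u3 5) (oseq u4 5) e2 +'
            single_term D j (oseq u5 5) e5) ->
  has_nontrivial_zero_K D d s a.
Proof.
  intros Hnd Hlt S1 S2 S3 S4 S5 R1 R2 R3 R4 R5 U1 U3 [He|He] Hres.
  - destruct (residue_root j u1 u2 u3 u4 u5 e1 e2 e5 U1 He Hres) as (z & Hz & Hroot).
    eapply zero_of_root; eauto using pi_dvdb_yc.
  - replace (pair_term D (oseq u1 5) (oseq u2 5) e1 +' pair_term D (oseq u3 5) (oseq u4 5) e2)
      with (pair_term D (oseq u3 5) (oseq u4 5) e2 +' pair_term D (oseq u1 5) (oseq u2 5) e1)
      in Hres by ring.
    destruct (residue_root j u3 u4 u1 u2 u5 e2 e1 e5 U3 He Hres) as (z & Hz & Hroot).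
    apply (zero_of_root s a i3 i4 i1 i2 i5 k j r3 r4 r1 r2 r5 u3 u4 u1 u2 u5 z
             (yc (fst e2)) (yc (snd e2)) (yc (fst e1)) (yc (snd e1)) (yc e5));
      auto using pi_dvdb_yc.
    + apply (Permutation_NoDup (Permutation_app_swap_app [i1; i2] [i3; i4] [i5]) Hnd).
    + intros i Hi. apply Hlt. cbn in *. tauto.
Qed.

End FiveVariables.

End RamifiedQuadratic.

Theorem lemma8 (D : Z) (hD : ramified_D D) (m d s : nat)
  (hm : Nat.odd m = true) (hm3 : (3 <= m)%nat) (hd : d = (2 * m)%nat)
  (a : nat -> Oel)
  (ha : forall i, (i < s)%nat -> ~ eqS (oseq (a i)) (fun _ => zeroZD))
  (k : nat)
  (hpairs : exists i1 i2 i3 i4 : nat, exists c c' : bool,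
      (i1 < s)%nat /\ (i2 < s)%nat /\ (i3 < s)%nat /\ (i4 < s)%nat /\
      i1 <> i2 /\ i1 <> i3 /\ i1 <> i4 /\ i2 <> i3 /\ i2 <> i4 /\ i3 <> i4 /\
      level_coef D d (a i1) k c /\ level_coef D d (a i2) k c /\
      level_coef D d (a i3) k c' /\ level_coef D d (a i4) k c')
  (hnext : exists j : nat, (j < s)%nat /\
      (at_level D d (a j) (k + 2) \/ at_level D d (a j) (k + 3) \/
       at_level D d (a j) (k + 4))) :
  has_nontrivial_zero_K D d s a.
Proof.
  subst d.
  destruct hpairs as (i1 & i2 & i3 & i4 & c & c' & h1 & h2 & h3 & h4 &
    n12 & n13 & n14 & n23 & n24 & n34 & L1 & L2 & L3 & L4).
  destruct hnext as (i5 & h5 & L5).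
  assert (L5' : exists j c5, In j [2; 3; 4]%nat /\ level_coef D (2 * m) (a i5) (k + j) c5)
    by (destruct L5 as [[c5 H]|[[c5 H]|[c5 H]]]; do 2 eexists; (split; [|exact H]); cbn; tauto).
  destruct L5' as (j & c5 & hj & L5').
  destruct (level_coef_splits D hD _ _ _ _ L1) as (r1 & u1 & R1 & S1 & U1 & C1).
  destruct (level_coef_splits D hD _ _ _ _ L2) as (r2 & u2 & R2 & S2 & U2 & C2).
  destruct (level_coef_splits D hD _ _ _ _ L3) as (r3 & u3 & R3 & S3 & U3 & C3).
  destruct (level_coef_splits D hD _ _ _ _ L4) as (r4 & u4 & R4 & S4 & U4 & C4).
  destruct (level_coef_splits D hD _ _ _ _ L5') as (r5 & u5 & R5 & S5 & U5 & _).
  assert (Hj : (0 < j < 2 * m)%nat) by (destruct m; [discriminate|]; cbn in hj; lia).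
  assert (Hne5 : forall i r u, splits D (a i) r u -> unitO D u ->
                   Nat.modulo r (2 * m) = Nat.modulo k (2 * m) -> i <> i5)
    by (intros; eapply index_ne_of_levels; eauto).
  destruct (residue_solution D hD j c c' hj (oseq u1 5) (oseq u2 5) (oseq u3 5) (oseq u4 5)
              (oseq u5 5) C1 C2 C3 C4 (U5 5%nat ltac:(lia))) as (e1 & e2 & e5 & He & Hres).
  apply (zero_of_residue_solution D hD m hm s a i1 i2 i3 i4 i5 k j r1 r2 r3 r4 r5
           u1 u2 u3 u4 u5 e1 e2 e5); auto.
  - pose proof (Hne5 _ _ _ S1 U1 R1); pose proof (Hne5 _ _ _ S2 U2 R2).
    pose proof (Hne5 _ _ _ S3 U3 R3); pose proof (Hne5 _ _ _ S4 U4 R4).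
    repeat constructor; cbn; intuition congruence.
  - intros i Hi. cbn in Hi. intuition congruence.
Qed.
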